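(* Fix a positive integer $m$ and let $1\le j\le m$. Let $\pi\sim\mathcal{S}_{m,n}$ be uniform, and let $T_j$ be the smallest index $t$ such that $\pi_t$ is the $j$-th occurrence of some card type in $\pi$ (equivalently, the largest $t$ such that $\{\pi_1,\dots,\pi_{t-1}\}$ contains no card type with multiplicity at least $j$). If $t=\gamma n^{1-1/j}$, where $\gamma>0$ may depend on $n$, then \[\Pr[T_j>t]=1-O(\gamma^{j})\quad\text{and}\quad \Pr[T_j>t]=O(\gamma^{-j}),\] where the implicit constants may depend on $m$.
   Context: $\mathcal{S}_{m,n}$ is the set of words over the alphabet $[n]=\{1,\dots,n\}$ in which each symbol appears exactly $m$ times; $\pi\sim\mathcal{S}_{m,n}$ denotes a uniformly random element, and $\pi_t$ its $t$-th letter. Asymptotic notation is as $n\to\infty$ with $m$ fixed. *)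

From HB Require Import structures.
From mathcomp Require Import all_boot all_order all_algebra.
From mathcomp Require Import reals exp.
Set Implicit Arguments. Unset Strict Implicit. Unset Printing Implicit Defensive.
Import Order.TTheory GRing.Theory Num.Theory.
Local Open Scope ring_scope.

(* A word of length m*n over the alphabet 'I_n (0-based encoding of [n]). *)
Definition word (m n : nat) := (m * n)%N.-tuple 'I_n.

Definition inS (m n : nat) (w : word m n) : bool :=
  [forall x : 'I_n, count_mem x w == m].

(* T_j(s): the smallest 1-based index t such that s_t is the j-th occurrence
   of its letter in s, i.e. count of s_t among s_1..s_t equals j.
   (If no such index exists, returns size s + 1; this never happens on S_{m,n}
   when 1 <= j <= m.) Letters are encoded as nats. *)
Definition Tj (j : nat) (s : seq nat) : nat :=
  (find (fun i => count_mem (nth 0%N s i) (take i.+1 s) == j) (iota 0 (size s))).+1.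

Definition probTgt (R : realType) (m n j : nat) (t : R) : R :=
  (#|[set w : word m n | inS w && (t < (Tj j (map val w))%:R)]|%:R)
  / (#|[set w : word m n | inS w]|%:R).

From HB Require Import structures.
From mathcomp Require Import all_boot all_order all_algebra.
From mathcomp Require Import reals exp.
From mathcomp Require Import ring lra.
Set Implicit Arguments. Unset Strict Implicit. Unset Printing Implicit Defensive.
Import Order.TTheory GRing.Theory Num.Theory.
Local Open Scope ring_scope.

(* Mark every position of a word independently with probability u.  The marked
   copies of each letter are then independent Binomial(m, u) variables, so no
   letter is marked j times with probability (1 - p)^n, where
   p = P[Bin(m, u) >= j] is of order C(m, j) u^j.  Moving the marked positions
   to the front is a bijection of S_{m,n}, so the same probability is the
   average of P[T_j > c] over c ~ Bin(mn, u).  Since P[T_j > c] is monotone in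
   c, Markov's inequality (for mn u ~ t/2) and Chebyshev's inequality (for
   mn u = 4t) compare P[T_j > t] with (1 - p)^n, and for u ~ t/(mn) the
   quantity n p is of order t^j / n^(j-1) = gamma^j. *)

Section BinomialExpectation.
Variables (R : realFieldType) (u : R).

Fixpoint sum_bits k (F : seq bool -> R) : R :=
  if k is k.+1 then sum_bits k (fun b => F (true :: b)) + sum_bits k (fun b => F (false :: b))
  else F [::].

Lemma eq_sum_bits k (F G : seq bool -> R) :
  (forall b, size b = k -> F b = G b) -> sum_bits k F = sum_bits k G.
Proof.
elim: k F G => [|k IH] F G eqFG /=; first exact: eqFG.
by congr (_ + _); apply: IH => b szb; apply: eqFG; rewrite /= szb.
Qed.

Lemma sum_bitsZ k a (F : seq bool -> R) : sum_bits k (fun b => a * F b) = a * sum_bits k F.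
Proof. by elim: k F => [|k IH] F //=; rewrite !IH mulrDr. Qed.

Lemma sum_bits_sum (I : finType) (P : pred I) k (F : I -> seq bool -> R) :
  sum_bits k (fun b => \sum_(i | P i) F i b) = \sum_(i | P i) sum_bits k (F i).
Proof. by elim: k F => [|k IH] F //=; rewrite !IH -big_split. Qed.

Definition bern_weight (b : seq bool) : R := \prod_(x <- b) (if x then u else 1 - u).

Lemma bern_weight_cons x b :
  bern_weight (x :: b) = (if x then u else 1 - u) * bern_weight b.
Proof. exact: big_cons. Qed.

(* [binomE k f] is the expectation of [f X] for [X ~ Binomial(k, u)]. *)
Fixpoint binomE k (f : nat -> R) : R :=
  if k is k.+1 then u * binomE k (fun c => f c.+1) + (1 - u) * binomE k f else f 0%N.

Lemma binomE_sum_bits k f :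
  binomE k f = sum_bits k (fun b => bern_weight b * f (count id b)).
Proof.
elim: k f => [|k IH] f /=; first by rewrite /bern_weight big_nil mul1r.
by rewrite !IH -!sum_bitsZ; congr (_ + _); apply: eq_sum_bits => b _;
  rewrite bern_weight_cons mulrA.
Qed.

Lemma eq_binomE k (f g : nat -> R) : f =1 g -> binomE k f = binomE k g.
Proof.
elim: k f g => [|k IH] f g eqfg //=.
by rewrite (IH f g) // (IH (fun c => f c.+1) (fun c => g c.+1)).
Qed.

Lemma binomE_const k a : binomE k (fun=> a) = a.
Proof. by elim: k => [|k IH] //=; rewrite IH -mulrDl subrKC mul1r. Qed.

Lemma binomED k (f g : nat -> R) :
  binomE k (fun c => f c + g c) = binomE k f + binomE k g.
Proof. by elim: k f g => [|k IH] f g //=; rewrite !IH; ring. Qed.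

Lemma binomEZ k a (f : nat -> R) : binomE k (fun c => a * f c) = a * binomE k f.
Proof. by elim: k f => [|k IH] f //=; rewrite !IH; ring. Qed.

Lemma binomEB k (f g : nat -> R) :
  binomE k (fun c => f c - g c) = binomE k f - binomE k g.
Proof.
rewrite (eq_binomE _ (g := fun c => f c + (-1) * g c)) => [|c]; last by rewrite mulN1r.
by rewrite binomED binomEZ mulN1r.
Qed.

Lemma sum_bits_mask_prod (T : finType) (r : seq T) (phi : T -> nat -> R) :
  sum_bits (size r) (fun b => bern_weight b * \prod_x phi x (count_mem x (mask b r)))
  = \prod_x binomE (count_mem x r) (phi x).
Proof.
elim: r phi => [|y r IH] phi /=; first by rewrite /bern_weight big_nil mul1r.
rewrite (eq_sum_bits (G := fun b => u * (bern_weight b *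
    \prod_x phi x ((y == x) + count_mem x (mask b r))%N))) => [|b _]; last first.
  by rewrite bern_weight_cons mulrA.
rewrite [X in _ + X](eq_sum_bits (G := fun b => (1 - u) * (bern_weight b *
    \prod_x phi x (count_mem x (mask b r))))) => [|b _]; last first.
  by rewrite bern_weight_cons mulrA.
rewrite !sum_bitsZ (IH (fun x c => phi x ((y == x) + c)%N)) IH.
set P := \prod_(x | x != y) binomE (count_mem x r) (phi x).
have P_shift : \prod_(x | x != y) binomE (count_mem x r) (fun c => phi x ((y == x) + c)%N) = P.
  by apply: eq_bigr => x ne_xy; apply: eq_binomE => c; rewrite eq_sym (negbTE ne_xy).
have P_add : \prod_(x | x != y) binomE ((y == x) + count_mem x r) (phi x) = P.
  by apply: eq_bigr => x ne_xy; rewrite eq_sym (negbTE ne_xy).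
rewrite (bigD1 y) // [X in _ + _ * X](bigD1 y) // [RHS](bigD1 y) //= P_shift -/P P_add.
rewrite eqxx add1n /=.
have -> : (fun c => phi y (1 + c)%N) = (fun c => phi y c.+1) by [].
by ring.
Qed.

Hypothesis u01 : 0 <= u <= 1.

Lemma ler_binomE k (f g : nat -> R) : (forall c, f c <= g c) -> binomE k f <= binomE k g.
Proof.
have /andP[u0 u1] := u01.
elim: k f g => [|k IH] f g lefg //=.
by rewrite lerD // ler_wpM2l ?subr_ge0 //; apply: IH.
Qed.

Lemma binomE_ge0 k (f : nat -> R) : (forall c, 0 <= f c) -> 0 <= binomE k f.
Proof. by move=> f_ge0; rewrite -(binomE_const k 0); apply: ler_binomE. Qed.

Lemma binomE_ge_term k i (f : nat -> R) : (forall c, 0 <= f c) -> (i <= k)%N ->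
  u ^+ i * (1 - u) ^+ (k - i) * f i <= binomE k f.
Proof.
have /andP[u0 u1] := u01.
elim: k i f => [|k IH] i f f_ge0 lik /=.
  by move: lik; rewrite leqn0 => /eqP ->; rewrite !mul1r.
have [fS_ge0 f_ge0'] : 0 <= u * binomE k (fun c => f c.+1) /\ 0 <= (1 - u) * binomE k f.
  by split; rewrite mulr_ge0 ?subr_ge0 ?binomE_ge0.
case: i lik => [|i] lik.
  apply: ler_wpDl fS_ge0 _; rewrite subn0 exprS mulrCA -mulrA ler_wpM2l ?subr_ge0 //.
  by have := IH 0%N f f_ge0 (leq0n k); rewrite expr0 !mul1r subn0.
apply: ler_wpDr f_ge0' _; rewrite subSS exprS -!mulrA ler_wpM2l //.
by rewrite mulrA; apply: IH.
Qed.

Lemma binomE_tail_ge k i : (i <= k)%N -> u <= 1 / 2 ->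
  u ^+ i <= 2 ^+ k * binomE k (fun c => (i <= c)%:R).
Proof.
move=> le_ik u_le; have /andP[u0 u1] := u01.
have := @binomE_ge_term k i (fun c => (i <= c)%:R) (fun=> ler0n _ _) le_ik.
rewrite leqnn mulr1 => term_le.
have one_le : 1 <= 2 ^+ k * (1 - u) ^+ (k - i).
  have -> : (2 : R) ^+ k = 2 ^+ (k - i) * 2 ^+ i by rewrite -exprD subnK.
  apply: le_trans (exprn_ege1 (k - i) (_ : 1 <= 2 * (1 - u))) _; first lra.
  rewrite exprMn; apply: ler_wpM2r; first by rewrite exprn_ge0 // subr_ge0.
  by apply: ler_peMr; [apply: exprn_ge0 | apply: exprn_ege1]; lra.
apply: le_trans (_ : u ^+ i * (2 ^+ k * (1 - u) ^+ (k - i)) <= _).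
  by rewrite ler_peMr ?exprn_ge0.
by rewrite mulrCA ler_wpM2l ?exprn_ge0.
Qed.

Lemma binomE_tail_le k i : binomE k (fun c => (i <= c)%:R) <= 'C(k, i)%:R * u ^+ i.
Proof.
have /andP[u0 u1] := u01.
elim: k i => [|k IH] [|i] /=; rewrite ?mul0r ?bin0 ?expr0 ?mulr1 //.
  by rewrite !binomE_const !mulr1 subrKC.
rewrite (eq_binomE _ (g := fun c => (i <= c)%:R)) // binS natrD [X in _ <= X]mulrDl.
rewrite addrC; apply: lerD; last by rewrite exprS mulrCA ler_wpM2l.
apply: le_trans (IH i.+1); rewrite ler_piMl ?lerBlDr ?lerDl //.
by apply: binomE_ge0 => c; rewrite ler0n.
Qed.

Lemma binomE_id k : binomE k (fun c => c%:R) = k%:R * u.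
Proof.
elim: k => [|k IH] /=; first by rewrite mul0r.
rewrite (eq_binomE _ (g := fun c => c%:R + 1)) => [|c]; last by rewrite -natr1.
by rewrite binomED binomE_const IH -natr1; ring.
Qed.

Lemma binomE_sqr k : binomE k (fun c => c%:R ^+ 2) = (k%:R * u) ^+ 2 + k%:R * u * (1 - u).
Proof.
elim: k => [|k IH] /=; first by rewrite mul0r expr0n /= mul0r addr0.
rewrite (eq_binomE _ (g := fun c => c%:R ^+ 2 + (2 * c%:R + 1))) => [|c]; last first.
  by rewrite -natr1; ring.
by rewrite !binomED binomEZ binomE_const IH binomE_id -natr1; ring.
Qed.

Lemma binomE_var k : binomE k (fun c => (c%:R - k%:R * u) ^+ 2) = k%:R * u * (1 - u).
Proof.
set v := k%:R * u.
rewrite (eq_binomE _ (g := fun c => c%:R ^+ 2 + ((- (2 * v)) * c%:R + v ^+ 2))) => [|c].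
  by rewrite !binomED binomEZ binomE_const binomE_sqr binomE_id -/v; ring.
by ring.
Qed.

Lemma binomE_markov k s : binomE k (fun c => (s < c)%:R) <= k%:R * u / s.+1%:R.
Proof.
have s1_gt0 : 0 < s.+1%:R :> R by rewrite ltr0n.
apply: (@le_trans _ _ (binomE k (fun c => s.+1%:R^-1 * c%:R))).
  apply: ler_binomE => c.
  case: ltnP => [ltsc|_]; last by rewrite mulr_ge0 ?invr_ge0 ?ler0n ?ltW.
  by rewrite ler_pdivlMl // mulr1 ler_nat.
by rewrite binomEZ binomE_id mulrC.
Qed.

Lemma binomE_chebyshev k (d : R) : 0 < d ->
  binomE k (fun c => (c%:R + d <= k%:R * u :> R)%:R) <= k%:R * u * (1 - u) / d ^+ 2.
Proof.
move=> d_gt0; have d2_gt0 : 0 < d ^+ 2 by rewrite exprn_gt0.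
apply: (@le_trans _ _ (binomE k (fun c => (d ^+ 2)^-1 * (c%:R - k%:R * u) ^+ 2))).
  apply: ler_binomE => c.
  case: (lerP (c%:R + d) (k%:R * u)) => [ledv|_] /=.
    by rewrite ler_pdivlMl // mulr1; nra.
  by rewrite mulr_ge0 ?invr_ge0 ?sqr_ge0 ?ltW.
by rewrite binomEZ binomE_var mulrC.
Qed.

Lemma nonincr_le_binomE k s (A : nat -> R) :
  (forall c, 0 <= A c) -> (forall c, (c <= s)%N -> A s <= A c) ->
  2 * (k%:R * u) <= s.+1%:R -> A s <= 2 * binomE k A.
Proof.
move=> A_ge0 A_nonincr le_ku_s.
have lowA c : A s * (1 - (s < c)%:R) <= A c.
  by case: (leqP c s) => [lecs|ltsc] /=; rewrite ?subr0 ?mulr1 ?A_nonincr ?subrr ?mulr0.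
have tail_le : binomE k (fun c => (s < c)%:R) <= 1 / 2.
  apply: le_trans (binomE_markov k s) _.
  by rewrite ler_pdivrMr ?ltr0n //; lra.
have := ler_binomE k lowA; rewrite binomEZ binomEB binomE_const.
have := A_ge0 s; nra.
Qed.

Lemma nondecr_le_binomE k s (D : nat -> R) : (0 < s)%N ->
  (forall c, 0 <= D c) -> (forall c, (s <= c)%N -> D s <= D c) ->
  k%:R * u = 4 * s%:R -> D s <= 2 * binomE k D.
Proof.
move=> s_gt0 D_ge0 D_nondecr ku_eq.
have s_ge1 : 1 <= s%:R :> R by rewrite ler1n.
have lowD c : D s * (1 - (c%:R + 3 * s%:R <= k%:R * u :> R)%:R) <= D c.
  case: (leqP s c) => [lesc|ltcs].
    by apply: le_trans (D_nondecr c lesc); rewrite ler_piMr ?D_ge0 ?gerBl ?ler0n.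
  have -> : c%:R + 3 * s%:R <= k%:R * u.
    rewrite ku_eq; have : c.+1%:R <= s%:R :> R by rewrite ler_nat.
    rewrite -natr1; lra.
  by rewrite subrr mulr0.
have tail_le : binomE k (fun c => (c%:R + 3 * s%:R <= k%:R * u :> R)%:R) <= 1 / 2.
  apply: le_trans (binomE_chebyshev k _) _; first lra.
  have /andP[u0 u1] := u01.
  rewrite ler_pdivrMr ?exprn_gt0 ?ku_eq; nra.
have := ler_binomE k lowD; rewrite binomEZ binomEB binomE_const.
have := D_ge0 s; nra.
Qed.

End BinomialExpectation.

Definition mult_lt (T : finType) j (s : seq T) : bool := [forall x, count_mem x s < j]%N.

Lemma mult_lt_mask (T : finType) j (b : bitseq) (s : seq T) :
  mult_lt j s -> mult_lt j (mask b s).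
Proof.
by move=> /forallP lt_s; apply/forallP => x; exact: leq_ltn_trans (leq_count_mask _ _ _) (lt_s x).
Qed.

Lemma mult_lt_rcons (T : finType) j (s : seq T) z :
  mult_lt j (rcons s z) = mult_lt j s && (count_mem z (rcons s z) != j).
Proof.
have count_rcons x : count_mem x (rcons s z) = (count_mem x s + (z == x))%N.
  by rewrite -cats1 count_cat /= addn0.
apply/forallP/andP => [lt_rcons | [/forallP lt_s ne_zj] x].
  split; last by rewrite neq_ltn lt_rcons.
  by apply/forallP => x; apply: leq_ltn_trans (lt_rcons x); rewrite count_rcons leq_addr.
rewrite count_rcons; case: eqVneq => [<-|_]; last by rewrite addn0.
by move: ne_zj (lt_s z); rewrite count_rcons eqxx /= addn1 => ne lt; rewrite ltn_neqAle ne.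
Qed.

Lemma mult_lt_take (T : finType) j (s : seq T) x0 i : (0 < j)%N -> (i <= size s)%N ->
  mult_lt j (take i s) = all (fun k => count_mem (nth x0 s k) (take k.+1 s) != j) (iota 0 i).
Proof.
move=> j_gt0; elim: i => [|i IH] lt_is; first by rewrite take0; apply/forallP.
rewrite (take_nth x0 lt_is) mult_lt_rcons -take_nth // (IH (ltnW lt_is)).
by rewrite -[i.+1]addn1 iotaD all_cat /= add0n addn1 andbT.
Qed.

Lemma Tj_le j (s : seq nat) : (Tj j s <= (size s).+1)%N.
Proof. by rewrite /Tj ltnS -[X in (_ <= X)%N](size_iota 0) find_size. Qed.

Lemma ltn_Tj n j (s : seq 'I_n) i : (0 < n)%N -> (0 < j)%N -> (i <= size s)%N ->
  (i < Tj j (map val s))%N = mult_lt j (take i s).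
Proof.
move=> n_gt0 j_gt0 le_is; set x0 : 'I_n := Ordinal n_gt0.
rewrite /Tj size_map ltnS leqNgt -has_take_leq ?size_iota // take_iota.
rewrite (minn_idPl le_is) -all_predC (mult_lt_take x0) //; apply: eq_in_all => k.
rewrite mem_iota add0n => /andP[_ lt_ki] /=.
rewrite (nth_map x0) ?(leq_trans lt_ki) // -map_take count_map.
by congr (_ != _); apply: eq_count => y /=; rewrite val_eqE.
Qed.

Lemma count_mask_negb (T : Type) (a : pred T) (b : bitseq) (s : seq T) : size b = size s ->
  (count a (mask b s) + count a (mask (map negb b) s))%N = count a s.
Proof.
elim: b s => [|x b IH] [|y s] //= [/IH <-].
by case: x => /=; [rewrite addnA | rewrite addnCA].
Qed.

Lemma mask_negb_inj (T : Type) (b : bitseq) (s1 s2 : seq T) :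
  size s1 = size b -> size s2 = size b ->
  mask b s1 = mask b s2 -> mask (map negb b) s1 = mask (map negb b) s2 -> s1 = s2.
Proof.
elim: b s1 s2 => [|x b IH] [|y1 s1] [|y2 s2] //= [sz1] [sz2].
by case: x => /= [[-> e1] e2 | e1 [-> e2]]; congr (_ :: _); apply: IH.
Qed.

Lemma sum_nat_indicator (R : realFieldType) (T : finType) (P Q : pred T) :
  \sum_(w | P w) (Q w)%:R = #|[set w | P w && Q w]|%:R :> R.
Proof.
rewrite -natr_sum -sum1dep_card big_mkcondr /=.
by congr _%:R; apply: eq_bigr => w _; case: (Q w).
Qed.

Lemma prod_nat_indicator (R : realFieldType) (T : finType) (P : pred T) :
  \prod_x (P x)%:R = [forall x, P x]%:R :> R.
Proof.
case: (boolP [forall x, P x]) => [/forallP allP | ].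
  by rewrite big1 // => x _; rewrite allP.
by rewrite negb_forall => /existsP[x /negbTE Px]; rewrite (bigD1 x) //= Px mul0r.
Qed.

Section Words.
Variables m n j : nat.

Definition cardS : nat := #|[set w : word m n | inS w]|.

(* The number of words with T_j > c, see [ltn_Tj]. *)
Definition cardTgt c : nat := #|[set w : word m n | inS w && mult_lt j (take c w)]|.

Lemma cardS_gt0 : (0 < n)%N -> (0 < cardS)%N.
Proof.
move=> n_gt0; set s := flatten [seq nseq m x | x <- enum 'I_n].
have count_s x : count_mem x s = m.
  rewrite count_flatten -map_comp sumnE big_map big_enum (bigD1 x) //= count_nseq /= eqxx.
  by rewrite big1 ?addn0 ?mul1n // => y ne_yx; rewrite count_nseq /= (negbTE ne_yx).
have size_s : size s == (m * n)%N.
  rewrite size_flatten /shape -map_comp sumnE big_map big_enum /=.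
  by rewrite (eq_bigr (fun=> m)) => [|x _]; rewrite ?size_nseq // sum_nat_const card_ord mulnC.
by apply/card_gt0P; exists (Tuple size_s); rewrite inE; apply/forallP => x; rewrite count_s.
Qed.

Lemma cardTgt_le_cardS c : (cardTgt c <= cardS)%N.
Proof. by apply/subset_leq_card/subsetP => w; rewrite !inE => /andP[]. Qed.

Lemma le_cardTgt c c' : (c <= c')%N -> (cardTgt c' <= cardTgt c)%N.
Proof.
move=> le_cc'; apply/subset_leq_card/subsetP => w; rewrite !inE => /andP[-> lt_w] /=.
by rewrite -(take_takel _ le_cc') takeEmask mult_lt_mask.
Qed.

Lemma cardTgt0 : (0 < j)%N -> cardTgt 0 = cardS.
Proof.
move=> j_gt0; have lt_nil : mult_lt j ([::] : seq 'I_n) by apply/forallP.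
by apply: eq_card => w; rewrite !inE take0 lt_nil andbT.
Qed.

Lemma word_mult_ge (w : word m n) : (0 < n)%N -> (j <= m)%N -> inS w -> ~~ mult_lt j w.
Proof.
move=> n_gt0 j_le_m /forallP inSw; apply/forallP => /(_ (Ordinal n_gt0)).
by rewrite (eqP (inSw _)) ltnNge j_le_m.
Qed.

Lemma cardTgt_full c : (0 < n)%N -> (j <= m)%N -> (m * n <= c)%N -> cardTgt c = 0%N.
Proof.
move=> n_gt0 j_le_m le_c; apply: eq_card0 => w; rewrite !inE take_oversize ?size_tuple //.
by apply/negbTE/nandP; case: (boolP (inS w)) => [/(word_mult_ge n_gt0 j_le_m)|]; [right | left].
Qed.

Lemma card_mask_mult_lt (b : bitseq) : size b = (m * n)%N ->
  #|[set w : word m n | inS w && mult_lt j (mask b w)]| = cardTgt (count id b).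
Proof.
move=> size_b; have size_w (w : word m n) : size w = size b by rewrite size_tuple.
have size_split (w : word m n) : size (mask b w ++ mask (map negb b) w) == (m * n)%N.
  by rewrite size_cat -!count_predT count_mask_negb ?size_w // count_predT size_tuple.
(* Moving the positions selected by [b] to the front permutes the letters of [w]. *)
pose split w := Tuple (size_split w).
have split_inj : injective split.
  move=> w1 w2 /(congr1 val) /eqP; rewrite eqseq_cat ?size_mask ?size_w //.
  by move=> /andP[/eqP e1 /eqP e2]; apply: val_inj; apply: mask_negb_inj e1 e2.
rewrite /cardTgt -[RHS](card_preimset _ split_inj); apply: eq_card => w; rewrite !inE.
have -> : inS (split w) = inS w.
  by apply: eq_forallb => x; rewrite /= count_cat count_mask_negb ?size_w.
by rewrite /= take_size_cat // size_mask ?size_w.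
Qed.

Lemma binomE_cardTgt (R : realFieldType) (u : R) :
  binomE u (m * n) (fun c => (cardTgt c)%:R)
  = cardS%:R * binomE u m (fun c => (c < j)%:R) ^+ n.
Proof.
set q := binomE u m _.
have q_exp (w : word m n) : inS w ->
    q ^+ n = sum_bits (m * n) (fun b => bern_weight u b * (mult_lt j (mask b w))%:R).
  move=> /forallP inSw; rewrite -[n in q ^+ n]card_ord -prodr_const.
  rewrite (eq_bigr (fun x => binomE u (count_mem x w) (fun c => (c < j)%:R))) => [|x _].
    rewrite -sum_bits_mask_prod size_tuple; apply: eq_sum_bits => b _.
    by rewrite prod_nat_indicator.
  by rewrite (eqP (inSw x)).
rewrite /cardS -sum1dep_card natr_sum mulr_suml.
rewrite (eq_bigr _ (fun w inSw => etrans (mul1r _) (q_exp w inSw))).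
rewrite -sum_bits_sum binomE_sum_bits.
apply: eq_sum_bits => b size_b; rewrite -card_mask_mult_lt //.
by rewrite -mulr_sumr sum_nat_indicator.
Qed.

End Words.

Section Bernoulli.
Variables (R : realFieldType) (p : R).
Hypothesis p01 : 0 <= p <= 1.

Lemma bernoulli_le_expn n : 1 - n%:R * p <= (1 - p) ^+ n.
Proof.
have /andP[p0 p1] := p01.
elim: n => [|n IH]; first by rewrite mul0r subr0.
have q_ge0 : 0 <= 1 - p by rewrite subr_ge0.
have qn_ge0 : 0 <= (1 - p) ^+ n by rewrite exprn_ge0.
rewrite exprS -natr1; have : 0 <= n%:R * p * p by rewrite !mulr_ge0.
nra.
Qed.

Lemma expn_mul_bernoulli_le1 n : (1 - p) ^+ n * (1 + n%:R * p) <= 1.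
Proof.
have /andP[p0 p1] := p01.
elim: n => [|n IH]; first by rewrite mul0r addr0 mulr1.
have qn_ge0 : 0 <= (1 - p) ^+ n by rewrite exprn_ge0 // subr_ge0.
have step : (1 - p) * (1 + (n%:R + 1) * p) <= 1 + n%:R * p.
  have : 0 <= n%:R * p * p + p * p by rewrite addr_ge0 ?mulr_ge0.
  nra.
by rewrite exprSr -natr1 -mulrA; apply: le_trans IH; rewrite ler_wpM2l.
Qed.

End Bernoulli.

Section Tails.
Variables (R : realType) (m n j : nat).
Hypotheses (n_gt0 : (0 < n)%N) (j_gt0 : (0 < j)%N) (j_le_m : (j <= m)%N).

Let S : R := (cardS m n)%:R.
Let A c : R := (cardTgt m n j c)%:R.
Let tailp (u : R) : R := binomE u m (fun c => (j <= c)%:R).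

Let S_gt0 : 0 < S. Proof. by rewrite ltr0n cardS_gt0. Qed.

Let A_ge0 c : 0 <= A c. Proof. exact: ler0n. Qed.

Let A_le_S c : A c <= S. Proof. by rewrite ler_nat cardTgt_le_cardS. Qed.

Let ratio01 c : 0 <= A c / S <= 1.
Proof. by rewrite divr_ge0 ?A_ge0 ?(ltW S_gt0) //= ler_pdivrMr // mul1r. Qed.

Let tailp01 (u : R) : 0 <= u <= 1 -> 0 <= tailp u <= 1.
Proof.
move=> u01; apply/andP; split; first by apply: binomE_ge0 => // c; exact: ler0n.
by rewrite -(binomE_const u m 1); apply: ler_binomE => // c; rewrite lern1 leq_b1.
Qed.

Lemma binomE_cardTgt_tailp (u : R) : binomE u (m * n) A = S * (1 - tailp u) ^+ n.
Proof.
rewrite binomE_cardTgt; congr (_ * _ ^+ _).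
rewrite (@eq_binomE _ u m _ (fun c => 1 - (j <= c)%:R)) ?binomEB ?binomE_const // => c.
by rewrite ltnNge; case: (j <= c)%N; rewrite /= ?subr0 ?subrr.
Qed.

Lemma one_sub_cardTgt_le_tailp s (u : R) : (0 < s)%N -> 0 <= u <= 1 ->
  (m * n)%:R * u = 4 * s%:R -> 1 - A s / S <= 2 * n%:R * tailp u.
Proof.
move=> s_gt0 u01 mnu; pose D c := S - A c.
have D_ge0 c : 0 <= D c by rewrite subr_ge0.
have D_nondecr c : (s <= c)%N -> D s <= D c.
  by move=> le_sc; rewrite lerB // ler_nat le_cardTgt.
have := nondecr_le_binomE u01 s_gt0 D_ge0 D_nondecr mnu.
rewrite binomEB binomE_const binomE_cardTgt_tailp /D => le_Ds.
have le_S : S * (1 - (1 - tailp u) ^+ n) <= S * (n%:R * tailp u).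
  apply: ler_wpM2l; first exact: ltW S_gt0.
  by have := bernoulli_le_expn (tailp01 u01) n; lra.
rewrite -(ler_pM2r S_gt0) mulrBl mul1r divfK ?gt_eqF //; lra.
Qed.

Lemma cardTgt_mul_tailp_le s (u : R) : 0 <= u <= 1 -> 2 * ((m * n)%:R * u) <= s.+1%:R ->
  A s / S * (n%:R * tailp u) <= 2.
Proof.
move=> u01 le_s; have /andP[p0 p1] := tailp01 u01; have /andP[h0 _] := ratio01 s.
have A_nonincr c : (c <= s)%N -> A s <= A c by move=> le_cs; rewrite ler_nat le_cardTgt.
have := nonincr_le_binomE u01 A_ge0 A_nonincr le_s.
rewrite binomE_cardTgt_tailp => le_As.
have le_ratio : A s / S <= 2 * (1 - tailp u) ^+ n by rewrite ler_pdivrMr //; lra.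
have := expn_mul_bernoulli_le1 (tailp01 u01) n.
have : 0 <= 1 + n%:R * tailp u by rewrite addr_ge0 ?mulr_ge0.
nra.
Qed.

Let m_gt0 : (0 < m)%N. Proof. exact: leq_trans j_gt0 j_le_m. Qed.

Let n_ge1 : 1 <= n%:R :> R. Proof. by rewrite ler1n. Qed.

Let expn_pred_le : n%:R ^+ j.-1 <= n%:R ^+ j :> R.
Proof. by rewrite -[in leRHS](prednK j_gt0) exprS ler_peMl ?exprn_ge0 ?ler0n. Qed.

Lemma cardTgt_lower_tail s :
  (1 - A s / S) * n%:R ^+ j.-1 <= 2 * 'C(m, j)%:R * 4 ^+ j * s%:R ^+ j.
Proof.
have /andP[h0 h1] := ratio01 s.
have nj1_ge0 : 0 <= n%:R ^+ j.-1 :> R by rewrite exprn_ge0 ?ler0n.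
have C_ge1 : 1 <= 'C(m, j)%:R :> R by rewrite ler1n bin_gt0.
rewrite -[2 * _ * _ * _]mulrA -exprMn.
case: (posnP s) => [-> | s_gt0].
  rewrite /A cardTgt0 // -/S divff ?gt_eqF // subrr mul0r.
  by rewrite !mulr_ge0 ?exprn_ge0 ?ler0n //; lra.
case: (ltnP (m * n) (4 * s)) => [lt_mn_4s | le_4s_mn].
  have n_le : n%:R <= 4 * s%:R :> R.
    by rewrite -natrM ler_nat (leq_trans (leq_pmull n m_gt0)) // ltnW.
  apply: le_trans (_ : n%:R ^+ j <= _).
    by apply: le_trans expn_pred_le; rewrite ler_piMl // lerBlDr lerDl.
  apply: le_trans (_ : (4 * s%:R) ^+ j <= _).
    by apply: lerXn2r; rewrite ?nnegrE ?mulr_ge0 ?ler0n.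
  by rewrite ler_peMl ?exprn_ge0 ?mulr_ge0 ?ler0n //; lra.
pose u : R := 4 * s%:R / (m * n)%:R.
have mn_gt0 : 0 < (m * n)%:R :> R by rewrite ltr0n muln_gt0 m_gt0.
have mnu : (m * n)%:R * u = 4 * s%:R by rewrite mulrC divfK ?gt_eqF.
have u01 : 0 <= u <= 1.
  apply/andP; split; first by rewrite divr_ge0 ?mulr_ge0 ?ler0n ?ltW.
  by rewrite ler_pdivrMr // mul1r -natrM ler_nat.
clearbody u; have /andP[u0 _] := u01.
have le_1h := one_sub_cardTgt_le_tailp s_gt0 u01 mnu.
have nu_le : n%:R * u <= 4 * s%:R.
  by rewrite -mnu natrM -mulrA ler_peMl ?mulr_ge0 ?ler0n ?ler1n.
apply: le_trans (_ : 2 * n%:R * tailp u * n%:R ^+ j.-1 <= _); first by rewrite ler_wpM2r.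
apply: le_trans (_ : 2 * 'C(m, j)%:R * (n%:R * u) ^+ j <= _); last first.
  by rewrite ler_wpM2l ?mulr_ge0 ?ler0n //; apply: lerXn2r; rewrite ?nnegrE ?mulr_ge0 ?ler0n.
have := binomE_tail_le u01 m j; rewrite -/(tailp u) => le_tail.
have : 0 <= n%:R * n%:R ^+ j.-1 :> R by rewrite mulr_ge0 ?ler0n.
rewrite exprMn -[in (n%:R ^+ j)](prednK j_gt0) exprS; nra.
Qed.

Lemma cardTgt_upper_tail s : (0 < s)%N ->
  A s / S * s%:R ^+ j <= 2 ^+ m.+1 * (2 * m%:R) ^+ j * n%:R ^+ j.-1.
Proof.
move=> s_gt0; have /andP[h0 _] := ratio01 s.
have K_ge0 : 0 <= (2 * m%:R) ^+ j * n%:R ^+ j.-1 :> R.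
  by rewrite mulr_ge0 ?exprn_ge0 ?mulr_ge0 ?ler0n.
case: (leqP (m * n) s) => [le_mn_s | lt_s_mn].
  by rewrite /A cardTgt_full // !mul0r -mulrA mulr_ge0 ?exprn_ge0.
pose u : R := s%:R / (2 * (m * n)%:R).
have mn_gt0 : 0 < (m * n)%:R :> R by rewrite ltr0n muln_gt0 m_gt0.
have mn2_gt0 : 0 < 2 * (m * n)%:R :> R by lra.
have s_eq : s%:R = 2 * (m * n)%:R * u by rewrite mulrC divfK ?gt_eqF.
have u_le : u <= 1 / 2.
  rewrite ler_pdivrMr //; have : s%:R <= (m * n)%:R :> R by rewrite ler_nat ltnW.
  lra.
have u01 : 0 <= u <= 1 by rewrite divr_ge0 ?mulr_ge0 ?ler0n //=; lra.
clearbody u.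
have hNp : A s / S * (n%:R * tailp u) <= 2.
  by apply: cardTgt_mul_tailp_le; rewrite // mulrA -s_eq ler_nat.
have := binomE_tail_ge u01 j_le_m u_le; rewrite -/(tailp u) => le_tail.
have key : A s / S * (n%:R * u ^+ j) <= 2 ^+ m.+1.
  apply: le_trans (_ : A s / S * (n%:R * (2 ^+ m * tailp u)) <= _).
    by rewrite ler_wpM2l // ler_wpM2l ?ler0n.
  have : 0 <= 2 ^+ m :> R by rewrite exprn_ge0.
  rewrite exprS; nra.
have -> : s%:R ^+ j = (2 * m%:R) ^+ j * n%:R ^+ j.-1 * (n%:R * u ^+ j).
  by rewrite s_eq natrM !exprMn -[in n%:R ^+ j](prednK j_gt0) exprS; ring.
have -> : 2 ^+ m.+1 * (2 * m%:R) ^+ j * n%:R ^+ j.-1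
  = (2 * m%:R) ^+ j * n%:R ^+ j.-1 * 2 ^+ m.+1 :> R by ring.
by rewrite mulrCA ler_wpM2l.
Qed.

Lemma probTgtE (t : R) : 0 <= t -> probTgt m n j t = A (Num.truncn t) / S.
Proof.
move=> t_ge0; rewrite /probTgt; congr (_%:R / _); apply: eq_card => w; rewrite !inE.
case inSw: (inS w) => //=; rewrite -truncn_lt_nat //.
case: (leqP (Num.truncn t) (m * n)) => [le_tmn | lt_mnt].
  by rewrite ltn_Tj // size_tuple.
rewrite take_oversize ?size_tuple ?(ltnW lt_mnt) // (negbTE (word_mult_ge n_gt0 j_le_m inSw)).
by apply/negbTE; rewrite -leqNgt (leq_trans (Tj_le _ _)) // size_map size_tuple.
Qed.

Lemma probTgt_lower_tail (t : R) : 0 <= t ->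
  (1 - probTgt m n j t) * n%:R ^+ j.-1 <= 2 * 'C(m, j)%:R * 4 ^+ j * t ^+ j.
Proof.
move=> t_ge0; rewrite probTgtE //; apply: le_trans (cardTgt_lower_tail _) _.
rewrite ler_wpM2l ?mulr_ge0 ?exprn_ge0 ?ler0n //; try lra.
by apply: lerXn2r; rewrite ?nnegrE ?ler0n ?truncn_le.
Qed.

Lemma probTgt_upper_tail (t : R) : 0 <= t ->
  probTgt m n j t * t ^+ j <= 2 ^+ m.+1 * (4 * m%:R) ^+ j * n%:R ^+ j.-1.
Proof.
move=> t_ge0; rewrite probTgtE //; set s := Num.truncn t.
have /andP[h0 h1] := ratio01 s.
have t_lt : t < s.+1%:R by exact: truncnS_gt.
case: (posnP s) => [s0 | s_gt0].
  have t_lt1 : t < 1 by rewrite s0 in t_lt.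
  apply: le_trans (_ : 1 <= _).
    exact: mulr_ile1 h0 (exprn_ge0 _ t_ge0) h1 (exprn_ile1 _ t_ge0 (ltW t_lt1)).
  have m_ge1 : 1 <= m%:R :> R by rewrite ler1n.
  by rewrite !mulr_ege1 ?exprn_ege1 //; lra.
have s_ge1 : 1 <= s%:R :> R by rewrite ler1n.
have t_le : t <= 2 * s%:R by move: t_lt; rewrite -natr1; lra.
apply: le_trans (_ : A s / S * (2 * s%:R) ^+ j <= _).
  by rewrite ler_wpM2l //; apply: lerXn2r; rewrite ?nnegrE //; lra.
have -> : 2 ^+ m.+1 * (4 * m%:R) ^+ j * n%:R ^+ j.-1
    = 2 ^+ j * (2 ^+ m.+1 * (2 * m%:R) ^+ j * n%:R ^+ j.-1) :> R.
  by rewrite (_ : 4 * m%:R = 2 * (2 * m%:R)) ?exprMn; [ring | lra].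
rewrite exprMn mulrCA ler_wpM2l ?cardTgt_upper_tail // exprn_ge0 //; lra.
Qed.

End Tails.

Lemma powR_1_subV_exprn (R : realType) (x : R) k : 0 <= x -> (0 < k)%N ->
  (x `^ (1 - k%:R^-1)) ^+ k = x ^+ k.-1.
Proof.
move=> x_ge0 k_gt0; rewrite -powR_mulrn ?powR_ge0 // -powRrM.
have -> : (1 - k%:R^-1) * k%:R = k.-1%:R :> R.
  by rewrite mulrBl mul1r mulVf ?pnatr_eq0 -?lt0n // -[in LHS](prednK k_gt0) -natr1 addrK.
by rewrite powR_mulrn.
Qed.

Unset Implicit Arguments.

Theorem lemma2p1 (R : realType) (m j : nat) :
  (0 < m)%N -> (1 <= j <= m)%N ->
  exists C : R, exists N : nat, forall n : nat, (N <= n)%N ->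
    forall gamma : R, 0 < gamma ->
      let t := gamma * (n%:R `^ (1 - (j%:R)^-1)) in
      1 - probTgt m n j t <= C * gamma ^+ j /\
      probTgt m n j t <= C * (gamma ^+ j)^-1.
Proof.
move=> _ /andP[j_gt0 j_le_m].
pose K1 : R := 2 * 'C(m, j)%:R * 4 ^+ j.
pose K2 : R := 2 ^+ m.+1 * (4 * m%:R) ^+ j.
have K1_ge0 : 0 <= K1 by rewrite /K1 !mulr_ge0 ?exprn_ge0 ?ler0n.
have K2_ge0 : 0 <= K2 by rewrite /K2 mulr_ge0 ?exprn_ge0 ?mulr_ge0 ?ler0n.
exists (K1 + K2), 1%N => n n_gt0 gamma gamma_gt0 t.
have t_ge0 : 0 <= t by rewrite /t mulr_ge0 ?powR_ge0 // ltW.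
have tj : t ^+ j = gamma ^+ j * n%:R ^+ j.-1 by rewrite /t exprMn powR_1_subV_exprn ?ler0n.
have nj_gt0 : 0 < n%:R ^+ j.-1 :> R by rewrite exprn_gt0 ?ltr0n.
have gj_gt0 : 0 < gamma ^+ j by rewrite exprn_gt0.
have := probTgt_lower_tail n_gt0 j_gt0 j_le_m t_ge0.
have := probTgt_upper_tail n_gt0 j_gt0 j_le_m t_ge0.
rewrite tj -/K1 -/K2; set h := probTgt m n j t => upper lower.
have K2_term : 0 <= K2 * (gamma ^+ j * n%:R ^+ j.-1).
  exact: mulr_ge0 K2_ge0 (mulr_ge0 (ltW gj_gt0) (ltW nj_gt0)).
split; first by rewrite -(ler_pM2r nj_gt0); nra.
rewrite ler_pdivlMr // -(ler_pM2r nj_gt0); nra.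
Qed.
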